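(* Let $F$ be a germ of holomorphic diffeomorphism of $(\mathbb C^2,0)$ of the form $F(x,y)=(x+p(x,y),y+q(x,y))$ with $\min\{\nu(p),\nu(q)\}\ge2$, and let $X=a\frac{\partial}{\partial x}+b\frac{\partial}{\partial y}$ be a formal vector field with $a,b\in\mathbb C[[x,y]]$, $\min\{\nu(a),\nu(b)\}\ge2$, such that $F=\mathrm{Exp}(X)$, i.e. $F=(\exp X(x),\exp X(y))$. Let $\pi:(M,D)\to(\mathbb C^2,0)$ be the blow-up at the origin, let $\tilde F$ be the unique germ of diffeomorphism of $(M,D)$ with $\pi\circ\tilde F=F\circ\pi$ and $\tilde F|_D=\mathrm{id}_D$, and let $\tilde X$ be the formal vector field along $D$ with $D\pi\cdot\tilde X=X\circ\pi$. Then for every characteristic direction $p\in D$ of $F$ we have $$\tilde F_p=\mathrm{Exp}(\tilde X_p),$$ where $\tilde F_p$, $\tilde X_p$ are the germs at $p$ and $\mathrm{Exp}$ is computed in local coordinates $(u,w)$ centered at $p$, i.e. $\mathrm{Exp}(\tilde X_p)=(\exp\tilde X_p(u),\exp\tilde X_p(w))$.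
   Context: $\nu(h)$ is the order of a power series $h$. For a formal vector field $Y$ of order $\ge2$ and a formal series $g$, $\exp Y(g)=\sum_{j\ge0}\frac1{j!}Y^j(g)$ with $Y^0(g)=g$, $Y^{j+1}(g)=Y(Y^j(g))$, the vector field acting as a derivation. Write $F(z)=z+P_k(z)+\cdots$ with $P_j$ homogeneous of degree $j$ and $P_k\not\equiv0$; a characteristic direction of $F$ is $[v]\in\mathbb P^1$ with $P_k(v)=\lambda v$ for some $\lambda\in\mathbb C$, and points of $D=\pi^{-1}(0)\cong\mathbb P^1$ are identified with directions. (At such points $\tilde F_p$ is tangent to the identity and $\tilde X_p$ has order $\ge2$.) *)

From HB Require Import structures.
From mathcomp Require Import all_boot all_order all_algebra.
From mathcomp Require Import complex.
From mathcomp Require Import reals.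
Set Implicit Arguments. Unset Strict Implicit. Unset Printing Implicit Defensive.
Import Order.TTheory GRing.Theory Num.Theory.
Local Open Scope ring_scope.

Section FPS.
Variable K : fieldType.

(* Formal power series in two variables: f i j = coefficient of x^i y^j
   (in a chart: u^i w^j). *)
Definition fps := nat -> nat -> K.

Definition fadd (f g : fps) : fps := fun i j => f i j + g i j.
Definition fmul (f g : fps) : fps := fun i j =>
  \sum_(a < i.+1) \sum_(b < j.+1) f a b * g (i - a)%N (j - b)%N.
Definition fconst (c : K) : fps := fun i j => if (i == 0%N) && (j == 0%N) then c else 0.
Definition fX : fps := fun i j => ((i == 1%N) && (j == 0%N))%:R.
Definition fY : fps := fun i j => ((i == 0%N) && (j == 1%N))%:R.
Definition fdx (f : fps) : fps := fun i j => f i.+1 j *+ i.+1.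
Definition fdy (f : fps) : fps := fun i j => f i j.+1 *+ j.+1.

Definition ord_ge (f : fps) (n : nat) : Prop := forall i j, (i + j < n)%N -> f i j = 0.

Definition vf_apply (Y : fps * fps) (g : fps) : fps :=
  fadd (fmul Y.1 (fdx g)) (fmul Y.2 (fdy g)).
Definition vf_iter (Y : fps * fps) (k : nat) (g : fps) : fps := iter k (vf_apply Y) g.

(* For nu(Y) >= 2, Y^k(g) has order >= k, so
   the coefficient of degree (i,j) only receives contributions from k <= i+j;
   the sum below is therefore the exact (formal) value. *)
Definition fexp (Y : fps * fps) (g : fps) : fps := fun i j =>
  \sum_(k < (i + j).+1) (k`!%:R)^-1 * vf_iter Y k g i j.

Definition fExp (Y : fps * fps) : fps * fps := (fexp Y fX, fexp Y fY).

(* Pullbacks g o pi along the two standard charts of the blow-up: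
   chart at [1:t] : pi(u,w) = (u, u (w + t)),
   chart at [0:1] : pi(u,w) = (u w, w).
   In both charts D = pi^-1(0) = {u = 0} resp. {w = 0} and p = (0,0). *)
Definition pull1 (t : K) (g : fps) : fps := fun i j =>
  \sum_(b < i.+1) g (i - b)%N b * ('C(b, j))%:R * t ^+ (b - j).
Definition pull2 (g : fps) : fps := fun i j =>
  if (i <= j)%N then g i (j - i)%N else 0.

(* A point of D = P^1: Some t is [1:t], None is [0:1]. *)
Definition dirvec (d : option K) : K * K :=
  match d with Some t => (1, t) | None => (0, 1) end.

Definition hev (f : fps) (k : nat) (v : K * K) : K :=
  \sum_(i < k.+1) f i (k - i)%N * v.1 ^+ i * v.2 ^+ (k - i).

(* [v] is a characteristic direction of F = id + (p,q):
   k = min(nu p, nu q), P_k = (p_k, q_k) not identically 0, P_k(v) = lambda v. *)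
Definition char_dir (p q : fps) (d : option K) : Prop :=
  exists k : nat,
    [/\ ord_ge p k /\ ord_ge q k,
        (exists2 i, (i <= k)%N & p i (k - i)%N != 0 \/ q i (k - i)%N != 0) &
        exists lam : K, hev p k (dirvec d) = lam * (dirvec d).1 /\
                        hev q k (dirvec d) = lam * (dirvec d).2].

(* (U,W) is the germ at p of the lift tilde F (in the chart coordinates
   centred at p) of F = (x + p, y + q):  pi o (U,W) = F o pi. *)
Definition lift_map (d : option K) (p q U W : fps) : Prop :=
  match d with
  | Some t => U = fadd fX (pull1 t p) /\
              fmul U (fadd W (fconst t)) = fadd (fmul fX (fadd fY (fconst t))) (pull1 t q)
  | None => W = fadd fY (pull2 q) /\
            fmul U W = fadd (fmul fX fY) (pull2 p)
  end.

(* (A,B) is the germ at p of the lift tilde X of X = a d/dx + b d/dy: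
   D pi . (A,B) = X o pi. *)
Definition lift_vf (d : option K) (a b A B : fps) : Prop :=
  match d with
  | Some t => A = pull1 t a /\
              fadd (fmul (fadd fY (fconst t)) A) (fmul fX B) = pull1 t b
  | None => fadd (fmul fY A) (fmul fX B) = pull2 a /\ B = pull2 b
  end.

End FPS.

Definition convergent (R : realType) (f : fps R[i]) : Prop :=
  exists M r : R, 0 < r /\ forall i j, `|f i j| * ((r ^+ (i + j))%:C)%C <= (M%:C)%C.
Arguments fX {K}.
Arguments fY {K}.

From HB Require Import structures.
From mathcomp Require Import all_boot all_order all_algebra.
From mathcomp Require Import complex reals.
From mathcomp Require Import boolp zify polyXY ring.
Import Order.TTheory GRing.Theory Num.Theory.
Local Open Scope ring_scope.
Set Implicit Arguments. Unset Strict Implicit. Unset Printing Implicit Defensive.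

(* Composing with a chart [pi] of the blow-up is a continuous algebra morphism
   [phi] of formal power series.  The equation [D pi . X~ = X o pi] says that
   [X~ (phi g) = phi (X g)] for the coordinate functions [g = x, y]; since both
   sides are [phi]-derivations and [phi] is continuous, it holds for every [g],
   and then [phi (exp X g) = exp X~ (phi g)].  For [g = x, y] this reads
   [pi o Exp X~ = F o pi = pi o F~].  In the chart [pi (u, w) = (u, u (w + t))]
   the first component of [Exp X~] is read off directly and the second one after
   cancelling the factor [u + O(2)], which is not a zero divisor; the other chart
   is symmetric.  The series [exp X~] only makes sense when [X~] has order at
   least 2, and this is where the characteristic direction [v] enters: the 2-jet
   of [X] is that of [F - id], and the only coefficient of the 1-jet of [X~] at
   [v] that can be nonzero is [det (v, P_2(v))]. *)

Section SeriesArithmetic.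
Variable K : fieldType.
Local Notation fps := (fps K).
Local Notation poly2 := {poly {poly K}}.
Implicit Types (f g h : fps) (P Q : poly2).

Lemma fpsP f g : (forall i j, f i j = g i j) -> f = g.
Proof. by move=> fg; apply/funext => i; apply/funext => j. Qed.

(* The ring axioms are transported from [{poly {poly K}}]: the coefficient of
   [x^i y^j] in a product only involves coefficients of the factors below [(i, j)]. *)
Definition coef2 P : fps := fun i j => P`_i`_j.
Definition trunc2 n f : poly2 := \poly_(i < n) \poly_(j < n) f i j.

Lemma coef2_trunc n f i j : (i < n)%N -> (j < n)%N -> coef2 (trunc2 n f) i j = f i j.
Proof. by move=> ilt jlt; rewrite /coef2 /trunc2 coef_poly ilt coef_poly jlt. Qed.

Lemma coef2D P Q : coef2 (P + Q) = fadd (coef2 P) (coef2 Q).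
Proof. by apply: fpsP => i j; rewrite /coef2 /fadd !coefD. Qed.

Lemma coef2M P Q : coef2 (P * Q) = fmul (coef2 P) (coef2 Q).
Proof.
apply: fpsP => i j; rewrite /coef2 /fmul coefM coef_sum.
by apply: eq_bigr => a _; rewrite coefM.
Qed.

Lemma eq_fmul_coef f g f' g' i j :
  (forall a b, (a <= i)%N -> (b <= j)%N -> f a b = f' a b /\ g a b = g' a b) ->
  fmul f g i j = fmul f' g' i j.
Proof.
move=> eq_fg; apply: eq_bigr => a _; apply: eq_bigr => b _.
have [-> _] := eq_fg a b (ltn_ord a) (ltn_ord b).
by have [_ ->] := eq_fg (i - a)%N (j - b)%N (leq_subr _ _) (leq_subr _ _).
Qed.

Lemma fmul_trunc n f g i j : (i < n)%N -> (j < n)%N ->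
  fmul f g i j = coef2 (trunc2 n f * trunc2 n g) i j.
Proof.
by move=> ilt jlt; rewrite coef2M; apply: eq_fmul_coef => a b ai bj;
  rewrite !coef2_trunc //; lia.
Qed.

Lemma fmulC : commutative (@fmul K).
Proof.
move=> f g; apply: fpsP => i j.
have [ilt jlt] : (i < (i + j).+1)%N /\ (j < (i + j).+1)%N by lia.
by rewrite !(fmul_trunc _ _ ilt jlt) [trunc2 _ f * _]mulrC.
Qed.

Lemma fmulA : associative (@fmul K).
Proof.
have trunc3 f g h i j : fmul f (fmul g h) i j =
    coef2 (trunc2 (i + j).+1 f * (trunc2 (i + j).+1 g * trunc2 (i + j).+1 h)) i j.
  rewrite coef2M; apply: eq_fmul_coef => a b ai bj.
  by rewrite coef2_trunc -?fmul_trunc //; lia.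
move=> f g h; apply: fpsP => i j.
by rewrite trunc3 fmulC trunc3 mulrA [X in _ = coef2 X _ _]mulrC.
Qed.

Lemma fmulDl : left_distributive (@fmul K) (@fadd K).
Proof.
move=> f g h; apply: fpsP => i j; rewrite /fmul /fadd -big_split.
by apply: eq_bigr => a _; rewrite -big_split; apply: eq_bigr => b _; apply: mulrDl.
Qed.

Lemma fmul_const c f i j : fmul (fconst c) f i j = c * f i j.
Proof.
rewrite /fmul big_ord_recl big_ord_recl /= !subn0 big1 => [|b _]; last first.
  by rewrite /fconst /= mul0r.
rewrite big1 => [|a _]; first by rewrite /fconst /= !addr0.
by rewrite big1 // => b _; rewrite /fconst /= mul0r.
Qed.

Lemma fmul1 : left_id (fconst 1) (@fmul K).
Proof. by move=> f; apply: fpsP => i j; rewrite fmul_const mul1r. Qed.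

Definition fzero : fps := fun _ _ => 0.
Definition fopp f : fps := fun i j => - f i j.
Definition fscale (c : K) f : fps := fun i j => c * f i j.

Lemma faddA : associative (@fadd K).
Proof. by move=> f g h; apply: fpsP => i j; rewrite /fadd addrA. Qed.
Lemma faddC : commutative (@fadd K).
Proof. by move=> f g; apply: fpsP => i j; rewrite /fadd addrC. Qed.
Lemma fadd0 : left_id fzero (@fadd K).
Proof. by move=> f; apply: fpsP => i j; rewrite /fadd add0r. Qed.
Lemma faddN : left_inverse fzero fopp (@fadd K).
Proof. by move=> f; apply: fpsP => i j; rewrite /fadd addNr. Qed.
Lemma fconst1_neq0 : fconst 1 != fzero.
Proof. by apply/eqP => /(congr1 (fun f => f 0%N 0%N)) /eqP; rewrite oner_eq0. Qed.

Lemma fscaleA a b f : fscale a (fscale b f) = fscale (a * b) f.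
Proof. by apply: fpsP => i j; rewrite /fscale mulrA. Qed.
Lemma fscale1 : left_id 1 fscale.
Proof. by move=> f; apply: fpsP => i j; rewrite /fscale mul1r. Qed.
Lemma fscaleDr : right_distributive fscale (@fadd K).
Proof. by move=> c f g; apply: fpsP => i j; rewrite /fscale /fadd mulrDr. Qed.
Lemma fscaleDl f : {morph fscale^~ f : a b / a + b >-> fadd a b}.
Proof. by move=> a b; apply: fpsP => i j; rewrite /fscale /fadd mulrDl. Qed.
Lemma fscaleAl c f g : fscale c (fmul f g) = fmul (fscale c f) g.
Proof.
apply: fpsP => i j; rewrite /fscale /fmul mulr_sumr; apply: eq_bigr => a _.
by rewrite mulr_sumr; apply: eq_bigr => b _; rewrite mulrA.
Qed.

End SeriesArithmetic.

HB.instance Definition _ (K : fieldType) := Choice.on (fps K).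
HB.instance Definition _ (K : fieldType) :=
  GRing.isZmodule.Build (fps K) (@faddA K) (@faddC K) (@fadd0 K) (@faddN K).
HB.instance Definition _ (K : fieldType) :=
  GRing.Zmodule_isComNzRing.Build (fps K)
    (@fmulA K) (@fmulC K) (@fmul1 K) (@fmulDl K) (@fconst1_neq0 K).
HB.instance Definition _ (K : fieldType) :=
  GRing.Zmodule_isLmodule.Build K (fps K)
    (@fscaleA K) (@fscale1 K) (@fscaleDr K) (@fscaleDl K).
HB.instance Definition _ (K : fieldType) :=
  GRing.Lmodule_isLalgebra.Build K (fps K) (@fscaleAl K).
HB.instance Definition _ (K : fieldType) :=
  GRing.Lalgebra_isComAlgebra.Build K (fps K).

Section SeriesCalculus.
Variable K : fieldType.
Local Notation fps := (fps K).
Local Notation poly2 := {poly {poly K}}.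
Local Notation x := (@fX K).
Local Notation y := (@fY K).
Implicit Types (f g h : fps) (P Q : poly2).

Lemma faddE f g : fadd f g = f + g. Proof. by []. Qed.
Lemma fmulE f g : fmul f g = f * g. Proof. by []. Qed.
Lemma fcoefD f g i j : (f + g) i j = f i j + g i j. Proof. by []. Qed.
Lemma fcoefN f i j : (- f) i j = - f i j. Proof. by []. Qed.
Lemma fcoefB f g i j : (f - g) i j = f i j - g i j. Proof. by []. Qed.
Lemma fcoef0 i j : (0 : fps) i j = 0. Proof. by []. Qed.
Lemma fcoefZ c f i j : (c *: f) i j = c * f i j. Proof. by []. Qed.
Lemma fcoef_sum (I : Type) (r : seq I) (P : pred I) (F : I -> fps) i j :
  (\sum_(k <- r | P k) F k) i j = \sum_(k <- r | P k) F k i j.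
Proof. exact: (big_morph (fun f : fps => f i j) (fun f g => fcoefD f g i j) (fcoef0 i j)). Qed.

Lemma fconst1 : fconst 1 = 1 :> fps. Proof. by []. Qed.
Lemma fconstE c : fconst c = c%:A :> fps.
Proof.
by apply: fpsP => i j; rewrite fcoefZ -fconst1 /fconst; case: ifP; rewrite ?mulr1 ?mulr0.
Qed.

Lemma coef2_truncMl P f i j : (coef2 P * f) i j = coef2 (P * trunc2 (i + j).+1 f) i j.
Proof. by rewrite coef2M; apply: eq_fmul_coef => a b ai bj; rewrite coef2_trunc //; lia. Qed.

Lemma fX_coef2 : x = coef2 'X.
Proof.
apply: fpsP => i j; rewrite /coef2 coefX /fX.
by case: i => [|[|i]] /=; rewrite ?coef0 ?coef1 //; case: j.
Qed.

Lemma fY_coef2 : y = coef2 'X%:P.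
Proof.
apply: fpsP => i j; rewrite /coef2 coefC /fY.
by case: i => [|i] /=; rewrite ?coef0 // coefX; case: j => [|[|j]].
Qed.

Lemma fcoef_XM f i j : (x * f) i j = if i is i'.+1 then f i' j else 0.
Proof.
rewrite fX_coef2 coef2_truncMl /coef2 coefXM; case: i => [|i] /=; first by rewrite coef0.
by rewrite -/(coef2 _ i j) coef2_trunc //; lia.
Qed.

Lemma fcoef_YM f i j : (y * f) i j = if j is j'.+1 then f i j' else 0.
Proof.
rewrite fY_coef2 coef2_truncMl /coef2 coefCM coefXM; case: j => [|j] //=.
by rewrite -/(coef2 _ i j) coef2_trunc //; lia.
Qed.

Lemma fcoef_monomial a b i j : (x ^+ a * y ^+ b) i j = ((i == a) && (j == b))%:R.
Proof.
elim: a i => [|a IHa] i.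
  rewrite expr0 mul1r; elim: b j => [|b IHb] j.
    by rewrite expr0 -fconst1 /fconst; case: ifP.
  by rewrite exprS fcoef_YM; case: j => [|j]; rewrite ?andbF //= IHb.
by rewrite exprS -mulrA fcoef_XM; case: i => [|i] //=; rewrite IHa.
Qed.

Lemma coef2_Leibniz (d : fps -> fps) (D : poly2 -> poly2) :
  (forall P, d (coef2 P) = coef2 (D P)) ->
  (forall P Q, D (P * Q) = D P * Q + P * D Q) ->
  (forall f f' i j, (forall a b, (a <= i.+1)%N -> (b <= j.+1)%N -> f a b = f' a b) ->
     d f i j = d f' i j) ->
  forall f g, d (f * g) = d f * g + f * d g.
Proof.
move=> d_coef2 DM d_local f g; apply: fpsP => i j.
pose n := (i + j).+3.
have -> : d (f * g) i j = d (coef2 (trunc2 n f * trunc2 n g)) i j.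
  by apply: d_local => a b ai bj; rewrite -fmul_trunc //; lia.
rewrite d_coef2 DM coef2D !coef2M -!d_coef2 faddE !fmulE fcoefD.
by congr (_ + _); apply: eq_fmul_coef => a b ai bj; split;
  rewrite ?coef2_trunc //; try lia; apply: d_local => a' b' ai' bj';
  rewrite coef2_trunc //; lia.
Qed.

Definition swap_deriv P : poly2 := swapXY (swapXY P)^`().

Lemma fdxM f g : fdx (f * g) = fdx f * g + f * fdx g.
Proof.
apply: (coef2_Leibniz (D := deriv)) => [P|P Q|f1 f2 i j eq_f]; last by rewrite /fdx eq_f.
  by apply: fpsP => i j; rewrite /fdx /coef2 coef_deriv coefMn.
exact: derivM.
Qed.

Lemma fdyM f g : fdy (f * g) = fdy f * g + f * fdy g.
Proof.
apply: (coef2_Leibniz (D := swap_deriv)) => [P|P Q|f1 f2 i j eq_f]; last by rewrite /fdy eq_f.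
  apply: fpsP => i j.
  by rewrite /fdy /coef2 /swap_deriv coef_swapXY coef_deriv coefMn coef_swapXY.
by rewrite /swap_deriv rmorphM derivM rmorphD !rmorphM /= !swapXYK.
Qed.

Lemma fdx_is_linear : semilinear (@fdx K).
Proof.
by split=> [c f|f g]; apply: fpsP => i j;
  rewrite ?fcoefZ ?fcoefD /fdx ?fcoefZ ?fcoefD ?mulrnAr ?mulrnDl.
Qed.
Lemma fdy_is_linear : semilinear (@fdy K).
Proof.
by split=> [c f|f g]; apply: fpsP => i j;
  rewrite ?fcoefZ ?fcoefD /fdy ?fcoefZ ?fcoefD ?mulrnAr ?mulrnDl.
Qed.

End SeriesCalculus.

HB.instance Definition _ (K : fieldType) :=
  GRing.isSemilinear.Build K (fps K) (fps K) _ (@fdx K) (@fdx_is_linear K).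
HB.instance Definition _ (K : fieldType) :=
  GRing.isSemilinear.Build K (fps K) (fps K) _ (@fdy K) (@fdy_is_linear K).

Section Order.
Variable K : fieldType.
Local Notation fps := (fps K).
Implicit Types (f g h : fps).

Lemma ord_ge_le f m n : (m <= n)%N -> ord_ge f n -> ord_ge f m.
Proof. by move=> le_mn f_n i j lt_ij; apply: f_n; lia. Qed.

Lemma ord_ge0 f : ord_ge f 0.
Proof. by []. Qed.

Lemma ord_geD f g n : ord_ge f n -> ord_ge g n -> ord_ge (f + g) n.
Proof. by move=> f_n g_n i j lt_ij; rewrite fcoefD f_n // g_n // addr0. Qed.

Lemma ord_geN f n : ord_ge f n -> ord_ge (- f) n.
Proof. by move=> f_n i j lt_ij; rewrite fcoefN f_n // oppr0. Qed.

Lemma ord_geB f g n : ord_ge f n -> ord_ge g n -> ord_ge (f - g) n.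
Proof. by move=> f_n /ord_geN; apply: ord_geD. Qed.

Lemma ord_ge_sum (I : Type) (r : seq I) (P : pred I) (F : I -> fps) n :
  (forall k, P k -> ord_ge (F k) n) -> ord_ge (\sum_(k <- r | P k) F k) n.
Proof. by move=> F_n; apply: (big_ind (fun f : fps => ord_ge f n)) => // f g; apply: ord_geD. Qed.

Lemma ord_geM f g m n : ord_ge f m -> ord_ge g n -> ord_ge (f * g) (m + n).
Proof.
move=> f_m g_n i j lt_ij; rewrite -fmulE /fmul big1 // => a _; rewrite big1 // => b _.
have [a_i b_j] := (ltn_ord a, ltn_ord b).
case: (ltnP (a + b) m) => ab_m; first by rewrite f_m ?mul0r.
by rewrite g_n ?mulr0 //; lia.
Qed.

Lemma ord_geMr f g n : ord_ge f n -> ord_ge (f * g) n.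
Proof. by move=> f_n; rewrite -[n]addn0; apply: ord_geM. Qed.

Lemma ord_geMl f g n : ord_ge g n -> ord_ge (f * g) n.
Proof. by rewrite mulrC; apply: ord_geMr. Qed.

Lemma ord_geZ c f n : ord_ge f n -> ord_ge (c *: f) n.
Proof. by move=> f_n i j lt_ij; rewrite fcoefZ f_n // mulr0. Qed.

Lemma ord_ge_fdx f n : ord_ge f n -> ord_ge (fdx f) n.-1.
Proof. by move=> f_n i j lt_ij; rewrite /fdx f_n ?mul0rn //; lia. Qed.

Lemma ord_ge_fdy f n : ord_ge f n -> ord_ge (fdy f) n.-1.
Proof. by move=> f_n i j lt_ij; rewrite /fdy f_n ?mul0rn //; lia. Qed.

Lemma ord_ge_subM f f' g g' n :
  ord_ge (f - f') n -> ord_ge (g - g') n -> ord_ge (f * g - f' * g') n.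
Proof.
have -> : f * g - f' * g' = (f - f') * g + f' * (g - g') by ring.
by move=> ff' gg'; apply: ord_geD; [apply: ord_geMr | apply: ord_geMl].
Qed.

Lemma ord_ge_all_eq0 f : (forall n, ord_ge f n) -> f = 0.
Proof. by move=> f_n; apply: fpsP => i j; rewrite (f_n (i + j).+1). Qed.

End Order.

Section VectorFields.
Variable K : fieldType.
Local Notation fps := (fps K).
Implicit Types (f g h : fps) (Y : fps * fps).

Definition vf_order2 Y := ord_ge Y.1 2 /\ ord_ge Y.2 2.

Lemma vf_applyE Y g : vf_apply Y g = Y.1 * fdx g + Y.2 * fdy g.
Proof. by []. Qed.

Lemma vf_apply_is_linear Y : semilinear (vf_apply Y).
Proof.
split=> [c f|f g]; rewrite !vf_applyE ?linearZ ?linearD /=.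
  by rewrite !scalerAr.
by rewrite !mulrDr addrACA.
Qed.

End VectorFields.

HB.instance Definition _ (K : fieldType) (Y : fps K * fps K) :=
  GRing.isSemilinear.Build K (fps K) (fps K) _ (vf_apply Y) (vf_apply_is_linear Y).

Section VectorFieldIterates.
Variable K : fieldType.
Local Notation fps := (fps K).
Local Notation x := (@fX K).
Local Notation y := (@fY K).
Implicit Types (f g h : fps) (Y : fps * fps).

Lemma vf_applyD Y f g : vf_apply Y (f + g) = vf_apply Y f + vf_apply Y g.
Proof. exact: linearD. Qed.

Lemma vf_applyZ Y c f : vf_apply Y (c *: f) = c *: vf_apply Y f.
Proof. exact: linearZ. Qed.

Lemma vf_applyM Y f g : vf_apply Y (f * g) = vf_apply Y f * g + f * vf_apply Y g.
Proof. by rewrite !vf_applyE fdxM fdyM; ring. Qed.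

Lemma vf_apply1 Y : vf_apply Y 1 = 0.
Proof.
rewrite vf_applyE.
have -> : fdx (1 : fps) = 0 by apply: fpsP => i j; rewrite /fdx -fconst1 /fconst /= mul0rn.
have -> : fdy (1 : fps) = 0 by apply: fpsP => i j; rewrite /fdy -fconst1 /fconst andbF mul0rn.
by rewrite !mulr0 addr0.
Qed.

Lemma vf_apply_fX Y : vf_apply Y x = Y.1.
Proof.
rewrite vf_applyE; have -> : fdx x = 1.
  by apply: fpsP => -[|i] [|j]; rewrite /fdx /fX -fconst1 /fconst //= mul0rn.
have -> : fdy x = 0 by apply: fpsP => i j; rewrite /fdy /fX andbF mul0rn.
by rewrite mulr1 mulr0 addr0.
Qed.

Lemma vf_apply_fY Y : vf_apply Y y = Y.2.
Proof.
rewrite vf_applyE; have -> : fdx y = 0 by apply: fpsP => i j; rewrite /fdx /fY mul0rn.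
have -> : fdy y = 1.
  by apply: fpsP => -[|i] [|j]; rewrite /fdy /fY -fconst1 /fconst //= ?andbF mul0rn.
by rewrite mulr1 mulr0 add0r.
Qed.

Lemma ord_ge_vf_apply Y g n : vf_order2 Y -> ord_ge g n -> ord_ge (vf_apply Y g) n.+1.
Proof.
move=> [Y1 Y2] g_n; rewrite vf_applyE.
by apply: ord_geD; apply: (@ord_ge_le _ _ n.+1 (2 + n.-1)); try lia; apply: ord_geM => //;
  [apply: ord_ge_fdx | apply: ord_ge_fdy].
Qed.

Lemma vf_iterS Y k g : vf_iter Y k.+1 g = vf_apply Y (vf_iter Y k g).
Proof. by []. Qed.

Lemma vf_iter_is_linear Y k : semilinear (vf_iter Y k).
Proof.
split=> [c f|f g]; elim: k => [|k IHk] //; rewrite !vf_iterS IHk.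
  exact: linearZ.
exact: linearD.
Qed.

Lemma ord_ge_vf_iter Y k g : vf_order2 Y -> ord_ge (vf_iter Y k g) k.
Proof.
by move=> Y2; elim: k => [|k IHk]; [apply: ord_ge0 | apply: ord_ge_vf_apply].
Qed.

Lemma vf_iterM Y n f g : vf_iter Y n (f * g) =
  \sum_(i < n.+1) (vf_iter Y (n - i) f * vf_iter Y i g) *+ 'C(n, i).
Proof.
elim: n => [|n IHn]; first by rewrite big_ord1 /= mulr1n.
rewrite vf_iterS IHn linear_sum.
under eq_bigr => i _ do rewrite raddfMn /= vf_applyM mulrnDl.
rewrite big_split /= [in RHS]big_ord_recl subn0 bin0 mulr1n.
under [X in _ = _ + X]eq_bigr => i _ do rewrite binS mulrnDr.
rewrite big_split /= addrA; congr (_ + _).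
  rewrite big_ord_recl subn0 bin0 mulr1n /=; congr (_ + _).
rewrite [RHS]big_ord_recr /= bin_small // mulr0n addr0.
by apply: eq_bigr => i _; rewrite /bump /= !add1n subSS -vf_iterS subnSK.
Qed.

End VectorFieldIterates.

Section ExponentialSeries.
Variable K : fieldType.
Local Notation fps := (fps K).
Implicit Types (f g h : fps).
Variable Y : fps * fps.

Definition exp_trunc n g : fps := \sum_(k < n) (k`!%:R)^-1 *: vf_iter Y k g.

Lemma fexp_is_linear : semilinear (fexp Y).
Proof.
split=> [c f|f g]; apply: fpsP => i j;
  rewrite /fexp ?fcoefZ ?fcoefD ?mulr_sumr -?big_split; apply: eq_bigr => k _.
  by rewrite (vf_iter_is_linear Y k).1 fcoefZ mulrCA.
by rewrite (vf_iter_is_linear Y k).2 fcoefD mulrDr.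
Qed.

Hypothesis Y2 : vf_order2 Y.

Lemma fexp_trunc n g i j : (i + j < n)%N -> fexp Y g i j = exp_trunc n g i j.
Proof.
move=> lt_ij_n; rewrite /exp_trunc fcoef_sum /fexp.
rewrite (big_ord_widen n (fun k => (k`!%:R)^-1 * vf_iter Y k g i j)) //.
rewrite big_mkcond /=; apply: eq_bigr => k _; rewrite fcoefZ; case: ifP => // k_gt.
by rewrite (ord_ge_vf_iter (k := k) g Y2) ?mulr0 //; lia.
Qed.

Lemma ord_ge_fexp_sub_trunc n g : ord_ge (fexp Y g - exp_trunc n g) n.
Proof. by move=> i j lt_ij; rewrite fcoefB (fexp_trunc _ lt_ij) subrr. Qed.

Lemma fexp1 : fexp Y 1 = 1.
Proof.
have iter1 k : vf_iter Y k.+1 1 = 0.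
  by elim: k => [|k IHk]; rewrite vf_iterS ?IHk ?linear0 // vf_apply1.
apply: fpsP => i j; rewrite /fexp big_ord_recl big1 => [|k _].
  by rewrite fact0 invr1 mul1r addr0.
by rewrite lift0 iter1 mulr0.
Qed.

Hypothesis K0 : has_pchar0 K.

Lemma bin_inv_fact n k : (k <= n)%N ->
  (n`!%:R)^-1 * 'C(n, k)%:R = ((n - k)`!%:R)^-1 * (k`!%:R)^-1 :> K.
Proof.
move=> le_kn; have fact_neq0 m : m`!%:R != 0 :> K.
  by rewrite ((pcharf0P K).1 K0) -lt0n fact_gt0.
rewrite -(bin_fact le_kn) !natrM; field.
by rewrite !fact_neq0 ((pcharf0P K).1 K0) -lt0n bin_gt0 le_kn.
Qed.

(* With [exp_trunc n h = (P h).[1]] for a polynomial [P h] in an auxiliary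
   variable, the Leibniz formula identifies [exp_trunc n (f * g)] with the part of
   degree [< n] of [P f * P g]; the other terms have order at least [n]. *)
Lemma exp_truncM n f g : ord_ge (exp_trunc n f * exp_trunc n g - exp_trunc n (f * g)) n.
Proof.
pose P h : {poly fps} := \poly_(k < n) ((k`!%:R)^-1 *: vf_iter Y k h).
have trunc_horner h : exp_trunc n h = (P h).[1].
  rewrite (horner_coef_wide 1 (size_poly n _)); apply: eq_bigr => k _.
  by rewrite coef_poly ltn_ord expr1n mulr1.
have truncM : exp_trunc n (f * g) = \sum_(m < n) (P f * P g)`_m.
  apply: eq_bigr => m _; rewrite vf_iterM coefMr scaler_sumr; apply: eq_bigr => k _.
  have lt_km := ltn_ord k; have lt_mn := ltn_ord m.
  have [lt_kn lt_mkn] : (k < n)%N /\ (m - k < n)%N by lia.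
  rewrite !coef_poly lt_kn lt_mkn -scaler_nat scalerA bin_inv_fact; last by lia.
  by rewrite -scalerA -scalerAl -scalerAr.
have prodE : exp_trunc n f * exp_trunc n g = \sum_(m < n + n) (P f * P g)`_m.
  rewrite !trunc_horner -hornerM (horner_coef_wide _ (n := n + n)).
    by apply: eq_bigr => m _; rewrite expr1n mulr1.
  have size_P h : (size (P h) <= n)%N by apply: size_poly.
  exact: leq_trans (size_polyMleq _ _) (leq_trans (leq_pred _) (leq_add (size_P f) (size_P g))).
rewrite prodE truncM big_split_ord /= addrC addrK.
apply: ord_ge_sum => m _; rewrite coefMr; apply: ord_ge_sum => k _; rewrite !coef_poly.
case: ifP => [_|]; last by rewrite mul0r.
case: ifP => [_|]; last by rewrite mulr0.
apply: (@ord_ge_le _ _ n ((n + m - k) + k)); first by have := ltn_ord k; lia.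
by apply: ord_geM; apply: ord_geZ; apply: ord_ge_vf_iter.
Qed.

Lemma fexpM f g : fexp Y (f * g) = fexp Y f * fexp Y g.
Proof.
apply/eqP; rewrite -subr_eq0; apply/eqP/ord_ge_all_eq0 => n.
pose T := exp_trunc n.
have -> : fexp Y (f * g) - fexp Y f * fexp Y g =
    (fexp Y (f * g) - T (f * g)) - (T f * T g - T (f * g))
    - (fexp Y f * fexp Y g - T f * T g) by ring.
apply: ord_geB; first by apply: ord_geB; [apply: ord_ge_fexp_sub_trunc | apply: exp_truncM].
by apply: ord_ge_subM; apply: ord_ge_fexp_sub_trunc.
Qed.

End ExponentialSeries.

HB.instance Definition _ (K : fieldType) (Y : fps K * fps K) :=
  GRing.isSemilinear.Build K (fps K) (fps K) _ (fexp Y) (fexp_is_linear Y).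

Section Pullback.
Variable K : fieldType.
Local Notation fps := (fps K).
Local Notation x := (@fX K).
Local Notation y := (@fY K).
Implicit Types (f g h : fps).

Lemma sum_ord_delta n (F : nat -> K) i : (i < n)%N -> \sum_(a < n) F a * (i == a)%:R = F i.
Proof.
move=> lt_in; rewrite (bigD1 (Ordinal lt_in)) //= eqxx mulr1 big1 ?addr0 // => a neq_ai.
by move: neq_ai; rewrite -(inj_eq val_inj) /= eq_sym => /negbTE ->; rewrite mulr0.
Qed.

Lemma ord_ge_sub_monomials f n :
  ord_ge (f - \sum_(a < n) \sum_(b < n) f a b *: (x ^+ a * y ^+ b)) n.
Proof.
move=> i j lt_ij; rewrite fcoefB fcoef_sum.
under eq_bigr => a _ do rewrite fcoef_sum.
under eq_bigr => a _ do under eq_bigr => b _ do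
  rewrite fcoefZ fcoef_monomial -mulnb natrM mulrA.
have [lt_in lt_jn] : (i < n)%N /\ (j < n)%N by lia.
under eq_bigr => a _ do rewrite (sum_ord_delta (fun b => f a b * (i == a)%:R) lt_jn).
by rewrite (sum_ord_delta (fun a => f a j) lt_in) subrr.
Qed.

Lemma eq0_by_monomials (eps : fps -> fps) :
  {morph eps : f g / f + g} ->
  (forall c a b, eps (c *: (x ^+ a * y ^+ b)) = 0) ->
  (forall f n, ord_ge f n -> ord_ge (eps f) n) ->
  forall f, eps f = 0.
Proof.
move=> epsD eps_monomial eps_ord f; apply: ord_ge_all_eq0 => n.
have eps0 : eps 0 = 0 by apply: (@addIr _ (eps 0)); rewrite -epsD !add0r.
pose Q := \sum_(a < n) \sum_(b < n) f a b *: (x ^+ a * y ^+ b).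
have epsQ : eps Q = 0.
  rewrite (big_morph eps epsD eps0) big1 // => a _.
  by rewrite (big_morph eps epsD eps0) big1.
by rewrite -(subrK Q f) epsD epsQ addr0; apply/eps_ord/ord_ge_sub_monomials.
Qed.

(* [phi] plays the role of [g |-> g o pi] for a chart [pi] of the blow-up. *)
Variable phi : {linear fps -> fps}.
Hypothesis phi_ord : forall f n, ord_ge f n -> ord_ge (phi f) n.
Hypothesis phi1 : phi 1 = 1.
Hypothesis phi_xM : forall f, phi (x * f) = phi x * phi f.
Hypothesis phi_yM : forall f, phi (y * f) = phi y * phi f.

Lemma pullback_monomialM a b g :
  phi (x ^+ a * (y ^+ b * g)) = phi x ^+ a * (phi y ^+ b * phi g).
Proof.
elim: a => [|a IHa]; last by rewrite !exprS -!mulrA phi_xM IHa.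
rewrite !expr0 !mul1r; elim: b => [|b IHb]; first by rewrite !expr0 !mul1r.
by rewrite !exprS -!mulrA phi_yM IHb.
Qed.

Lemma pullbackM f g : phi (f * g) = phi f * phi g.
Proof.
apply/eqP; rewrite -subr_eq0; apply/eqP; move: f.
apply: (eq0_by_monomials (eps := fun f => phi (f * g) - phi f * phi g)).
- by move=> f1 f2; rewrite mulrDl !linearD /=; ring.
- move=> c a b; have phi_m : phi (x ^+ a * y ^+ b * g) = phi (x ^+ a * y ^+ b) * phi g.
    by rewrite -mulrA pullback_monomialM -[y ^+ b]mulr1 pullback_monomialM phi1 mulr1 mulrA.
  by rewrite -scalerAl !linearZ /= phi_m -scalerAl subrr.
- by move=> f n f_n; apply: ord_geB; [apply/phi_ord/ord_geMr | apply/ord_geMr/phi_ord].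
Qed.

Variables X Y : fps * fps.
Hypotheses (X2 : vf_order2 X) (Y2 : vf_order2 Y).
(* [Y] is [pi]-related to [X]. *)
Hypothesis related_x : vf_apply Y (phi x) = phi X.1.
Hypothesis related_y : vf_apply Y (phi y) = phi X.2.

Lemma pullback_vf_apply g : phi (vf_apply X g) = vf_apply Y (phi g).
Proof.
apply/eqP; rewrite -subr_eq0; apply/eqP; move: g.
pose eps g := phi (vf_apply X g) - vf_apply Y (phi g).
have eps_mul f g : eps (f * g) = eps f * phi g + phi f * eps g.
  by rewrite /eps vf_applyM linearD !pullbackM vf_applyM; ring.
have eps_monomial a b : eps (x ^+ a * y ^+ b) = 0.
  have eps_x : eps x = 0 by rewrite /eps vf_apply_fX related_x subrr.
  have eps_y : eps y = 0 by rewrite /eps vf_apply_fY related_y subrr.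
  elim: a => [|a IHa]; last by rewrite exprS -mulrA eps_mul IHa eps_x mul0r mulr0 addr0.
  rewrite expr0 mul1r; elim: b => [|b IHb].
    by rewrite /eps expr0 vf_apply1 phi1 vf_apply1 linear0 subrr.
  by rewrite exprS eps_mul IHb eps_y mul0r mulr0 addr0.
apply: (eq0_by_monomials (eps := eps)).
- by move=> f g; rewrite /eps !vf_applyD !(raddfD phi) vf_applyD; ring.
- move=> c a b; rewrite /eps vf_applyZ !(linearZ_LR phi) vf_applyZ -scalerBr.
  by rewrite -/(eps _) eps_monomial scaler0.
- move=> f n f_n; apply: ord_geB; first by apply/phi_ord/(ord_ge_le (leqnSn n))/ord_ge_vf_apply.
  by apply/(ord_ge_le (leqnSn n))/ord_ge_vf_apply => //; apply: phi_ord.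
Qed.

Lemma pullback_fexp g : phi (fexp X g) = fexp Y (phi g).
Proof.
have phi_trunc n : phi (exp_trunc X n g) = exp_trunc Y n (phi g).
  rewrite linear_sum; apply: eq_bigr => k _; rewrite (linearZ_LR phi); congr (_ *: _).
  by elim: (k : nat) => [|m IHm] //; rewrite !vf_iterS pullback_vf_apply IHm.
apply/eqP; rewrite -subr_eq0; apply/eqP/ord_ge_all_eq0 => n.
have -> : phi (fexp X g) - fexp Y (phi g) =
    phi (fexp X g - exp_trunc X n g) - (fexp Y (phi g) - exp_trunc Y n (phi g)).
  by rewrite (linearB phi) phi_trunc; ring.
by apply: ord_geB; [apply: phi_ord |]; apply: ord_ge_fexp_sub_trunc.
Qed.

End Pullback.

Section ChartLinearity.
Variable K : fieldType.
Local Notation fps := (fps K).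
Implicit Types (f g h : fps).

Lemma pull1_is_linear (t : K) : semilinear (pull1 t).
Proof.
split=> [c f|f g]; apply: fpsP => i j; rewrite ?fcoefZ ?fcoefD /pull1.
  by rewrite mulr_sumr; apply: eq_bigr => b _; rewrite !mulrA.
by rewrite -big_split; apply: eq_bigr => b _; rewrite !mulrDl.
Qed.

Lemma pull2_is_linear : semilinear (@pull2 K).
Proof.
by split=> [c f|f g]; apply: fpsP => i j;
  rewrite ?fcoefZ ?fcoefD /pull2; case: ifP; rewrite ?mulr0 ?addr0.
Qed.

End ChartLinearity.

HB.instance Definition _ (K : fieldType) (t : K) :=
  GRing.isSemilinear.Build K (fps K) (fps K) _ (pull1 t) (pull1_is_linear t).
HB.instance Definition _ (K : fieldType) :=
  GRing.isSemilinear.Build K (fps K) (fps K) _ (@pull2 K) (@pull2_is_linear K).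

Section ChartPullbacks.
Variable K : fieldType.
Local Notation fps := (fps K).
Local Notation x := (@fX K).
Local Notation y := (@fY K).
Implicit Types (f g h : fps).
Variable t : K.

Lemma pull1_coef_lt f n i j : ord_ge f n -> (i < n)%N -> pull1 t f i j = 0.
Proof.
move=> f_n lt_in; rewrite /pull1 big1 // => b _.
by rewrite f_n ?mul0r //; have := ltn_ord b; lia.
Qed.

Lemma ord_ge_pull1 f n : ord_ge f n -> ord_ge (pull1 t f) n.
Proof. by move=> f_n i j lt_ij; apply: (pull1_coef_lt _ f_n); lia. Qed.

Lemma pull1_1 : pull1 t 1 = 1.
Proof.
apply: fpsP => i j; rewrite -fconst1 /pull1 big_ord_recl big1 => [|b _]; last first.
  by rewrite /fconst andbF !mul0r.
rewrite /fconst subn0 bin0n expr0 mulr1 addr0.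
by case: i => [|i] /=; case: j => [|j] //=; rewrite ?mul1r ?mulr0 ?mul0r.
Qed.

Lemma pull1_xM f : pull1 t (x * f) = x * pull1 t f.
Proof.
apply: fpsP => -[|i] j; rewrite fcoef_XM /pull1; first by rewrite big_ord1 fcoef_XM !mul0r.
rewrite big_ord_recr /= subnn fcoef_XM !mul0r addr0.
by apply: eq_bigr => b _; rewrite fcoef_XM subSn // -ltnS.
Qed.

Lemma pull1_yM f : pull1 t (y * f) = x * (y + t%:A) * pull1 t f.
Proof.
apply: fpsP => -[|i] j; rewrite -mulrA fcoef_XM /pull1; first by rewrite big_ord1 fcoef_YM !mul0r.
rewrite mulrDl fcoefD fcoef_YM mulr_algl fcoefZ big_ord_recl /= fcoef_YM !mul0r add0r.
case: j => [|j].
  rewrite mulr_sumr add0r; apply: eq_bigr => b _ /=.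
  by rewrite /bump /= add1n fcoef_YM subSS !bin0 !subn0 exprS; ring.
rewrite mulr_sumr -big_split; apply: eq_bigr => b _ /=.
rewrite /bump /= add1n fcoef_YM subSS binS natrD subSS.
case: (leqP j.+1 b) => [le_jb|lt_bj]; first by rewrite -(subnSK le_jb) exprS; ring.
by rewrite (bin_small lt_bj); ring.
Qed.

Lemma pull1_x : pull1 t x = x.
Proof. by rewrite -[in LHS](mulr1 x) pull1_xM pull1_1 mulr1. Qed.

Lemma pull1_y : pull1 t y = x * (y + t%:A).
Proof. by rewrite -[in LHS](mulr1 y) pull1_yM pull1_1 mulr1. Qed.

Lemma pull1M f g : pull1 t (f * g) = pull1 t f * pull1 t g.
Proof.
have xM h : pull1 t (x * h) = pull1 t x * pull1 t h by rewrite pull1_xM pull1_x.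
have yM h : pull1 t (y * h) = pull1 t y * pull1 t h by rewrite pull1_yM pull1_y.
exact: (pullbackM ord_ge_pull1 pull1_1 xM yM).
Qed.

Lemma pull1_coef20 f : pull1 t f 2%N 0%N = hev f 2%N (1, t).
Proof.
rewrite /pull1 /hev !big_ord_recl !big_ord0 /=.
have -> : bump 0 0 = 1%N by []. have -> : bump 0 1 = 2%N by [].
by rewrite !subn0 subnn -[(2 - 1)%N]/1%N !bin0 !expr1n !expr0 !expr1; ring.
Qed.

Lemma ord_ge_pull2 f n : ord_ge f n -> ord_ge (pull2 f) n.
Proof. by move=> f_n i j lt_ij; rewrite /pull2; case: ifP => // le_ij; rewrite f_n //; lia. Qed.

Lemma pull2_1 : pull2 1 = 1 :> fps.
Proof.
apply: fpsP => -[|i] j; rewrite -fconst1 /pull2 /fconst /=; first by rewrite subn0.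
by case: ifP; rewrite ?andbF.
Qed.

Lemma pull2_xM f : pull2 (x * f) = x * y * pull2 f.
Proof.
apply: fpsP => -[|i] j; rewrite -mulrA fcoef_XM; first by rewrite /pull2 fcoef_XM; case: (0 <= j)%N.
rewrite fcoef_YM /pull2; case: j => [|j] //=.
by rewrite ltnS subSS fcoef_XM; case: ifP.
Qed.

Lemma pull2_yM f : pull2 (y * f) = y * pull2 f.
Proof.
apply: fpsP => i -[|j]; rewrite fcoef_YM /pull2.
  by case: i => [|i] //=; rewrite fcoef_YM.
case: (leqP i j) => [le_ij|lt_ji]; first by rewrite (leqW le_ij) fcoef_YM (subSn le_ij).
have -> : (i <= j.+1)%N = (i == j.+1) by apply/idP/eqP; lia.
by case: eqP => // ->; rewrite fcoef_YM subnn.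
Qed.

Lemma pull2_x : pull2 x = x * y.
Proof. by rewrite -[in LHS](mulr1 x) pull2_xM pull2_1 mulr1. Qed.

Lemma pull2_y : pull2 y = y.
Proof. by rewrite -[in LHS](mulr1 y) pull2_yM pull2_1 mulr1. Qed.

Lemma pull2M f g : pull2 (f * g) = pull2 f * pull2 g.
Proof.
have xM h : pull2 (x * h) = pull2 x * pull2 h by rewrite pull2_xM pull2_x.
have yM h : pull2 (y * h) = pull2 y * pull2 h by rewrite pull2_yM pull2_y.
exact: (pullbackM ord_ge_pull2 pull2_1 xM yM).
Qed.

End ChartPullbacks.

Section LiftToBlowup.
Variable K : fieldType.
Local Notation fps := (fps K).
Local Notation x := (@fX K).
Local Notation y := (@fY K).
Implicit Types (f g h p q a b U W A B : fps).

Lemma fexp_coef_lt3 (Y : fps * fps) g i j :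
  vf_order2 Y -> ord_ge (vf_apply Y g) 2 -> (i + j < 3)%N ->
  fexp Y g i j = g i j + vf_apply Y g i j.
Proof.
move=> Y2 Yg2 lt_ij; rewrite (fexp_trunc Y2 (n := 3)) // /exp_trunc fcoef_sum.
rewrite !big_ord_recl big_ord0 !fcoefZ /=.
rewrite (ord_ge_vf_apply Y2 Yg2 lt_ij) -[(bump 0 0)`!]/1%N fact0 invr1.
by rewrite !mul1r mulr0 !addr0.
Qed.

Lemma fExp_jet2 p q a b : vf_order2 (a, b) -> fExp (a, b) = (fadd x p, fadd y q) ->
  (forall i j, (i + j < 3)%N -> p i j = a i j) /\
  (forall i j, (i + j < 3)%N -> q i j = b i j).
Proof.
move=> ab2 [Ex Ey]; split=> i j lt_ij.
  move: (congr1 (fun f => f i j) Ex) => /=.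
  by rewrite fexp_coef_lt3 // vf_apply_fX ?fcoefD; [move/addrI | case: ab2].
move: (congr1 (fun f => f i j) Ey) => /=.
by rewrite fexp_coef_lt3 // vf_apply_fY ?fcoefD; [move/addrI | case: ab2].
Qed.

Lemma eq_hev2 f g v : (forall i j, (i + j < 3)%N -> f i j = g i j) -> hev f 2 v = hev g 2 v.
Proof. by move=> eq_fg; apply: eq_bigr => i _; rewrite eq_fg //; have := ltn_ord i; lia. Qed.

Lemma hev2_vertical f : hev f 2 (0, 1) = f 0%N 2%N.
Proof. by rewrite /hev !big_ord_recl big_ord0 /= !expr1n !expr0n /= !mulr1 !mulr0 !addr0 subn0. Qed.

Lemma hev_ord_gt f m n v : ord_ge f m -> (n < m)%N -> hev f n v = 0.
Proof.
move=> f_m lt_nm; rewrite /hev big1 // => i _.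
by rewrite f_m ?mul0r //; have := ltn_ord i; lia.
Qed.

Lemma char_dir_parallel p q d : ord_ge p 2 -> ord_ge q 2 -> char_dir p q d ->
  hev q 2 (dirvec d) * (dirvec d).1 = hev p 2 (dirvec d) * (dirvec d).2.
Proof.
move=> p2 q2 [k [[pk qk] [i le_ik nz] [lam [Pv Qv]]]].
case: (ltngtP k 2) => [lt_k2|gt_k2|eq_k2]; last by subst k; rewrite Pv Qv mulrAC.
  by exfalso; case: nz => /eqP []; [apply: p2 | apply: q2]; lia.
by rewrite (hev_ord_gt _ pk) // (hev_ord_gt _ qk) // !mul0r.
Qed.

Lemma lift_vf_chart1_order2 t a b A B : ord_ge a 2 -> ord_ge b 2 ->
  hev b 2 (1, t) = t * hev a 2 (1, t) -> lift_vf (Some t) a b A B -> vf_order2 (A, B).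
Proof.
move=> a2 b2 char_ab [EA EB]; have A2 : ord_ge A 2 by rewrite EA; apply: ord_ge_pull1.
split=> //= i j lt_ij.
have B_coef : B i j = pull1 t b i.+1 j - (y * A) i.+1 j - t * A i.+1 j.
  move: (congr1 (fun f => f i.+1 j) EB).
  by rewrite !faddE !fmulE fconstE fcoefD fcoef_XM mulrDl fcoefD mulr_algl fcoefZ => <-; ring.
have b1 k : pull1 t b 1 k = 0 by apply: pull1_coef_lt b2 _.
have A1 k : A 1 k = 0 by rewrite EA; apply: pull1_coef_lt a2 _.
rewrite {}B_coef fcoef_YM; case: i lt_ij => [|[|i]] lt_ij; last by lia.
- by case: j lt_ij => [|[|j]] lt_ij; rewrite ?b1 ?A1 ?mulr0 ?subr0 //; lia.
- case: j lt_ij => [|j] lt_ij; last by lia.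
  (* [B_(1,0) = b_2(1, t) - t a_2(1, t)] *)
  by rewrite EA !pull1_coef20 char_ab subr0 subrr.
Qed.

Lemma lift_vf_chart2_order2 a b A B : ord_ge a 2 -> ord_ge b 2 -> hev a 2 (0, 1) = 0 ->
  lift_vf None a b A B -> vf_order2 (A, B).
Proof.
rewrite hev2_vertical => a2 b2 a02 [EA EB]; have B2 : ord_ge B 2 by rewrite EB; apply: ord_ge_pull2.
split=> //= i j lt_ij.
have A_coef : A i j = pull2 a i j.+1 - (if i is i'.+1 then B i' j.+1 else 0).
  move: (congr1 (fun f => f i j.+1) EA).
  by rewrite !faddE !fmulE fcoefD fcoef_XM fcoef_YM => <-; rewrite addrK.
rewrite {}A_coef /pull2; case: i lt_ij => [|[|i]] lt_ij; last by lia.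
- case: j lt_ij => [|[|j]] lt_ij; last by lia.
    by rewrite /= subn0 a2 ?subr0.
  by rewrite /= subn0 a02 subr0.
- case: j lt_ij => [|j] lt_ij; last by lia.
  by rewrite /= a2 // B2 // subr0.
Qed.

Lemma fexp_alg (Y : fps * fps) (c : K) : vf_order2 Y -> fexp Y c%:A = c%:A.
Proof. by move=> Y2; rewrite (linearZ_LR (fexp Y)) /= fexp1. Qed.

Lemma lreg_add_ord2 u r : (forall h n, ord_ge (u * h) n.+1 -> ord_ge h n) ->
  ord_ge r 2 -> GRing.lreg (u + r).
Proof.
move=> u_shift r2; apply: mulrI0_lreg => h uh0; apply: ord_ge_all_eq0.
elim=> [|n IHn]; first exact: ord_ge0.
apply: u_shift; have -> : u * h = - (r * h) by apply/eqP; rewrite -addr_eq0 -mulrDl uh0.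
by apply/ord_geN/(ord_ge_le _ (ord_geM r2 IHn)); lia.
Qed.

Lemma lreg_x_add r : ord_ge r 2 -> GRing.lreg (x + r).
Proof.
apply: lreg_add_ord2 => h n xh i j lt_ij.
by have := xh i.+1 j; rewrite fcoef_XM; apply; lia.
Qed.

Lemma lreg_y_add r : ord_ge r 2 -> GRing.lreg (y + r).
Proof.
apply: lreg_add_ord2 => h n yh i j lt_ij.
by have := yh i j.+1; rewrite fcoef_YM; apply; lia.
Qed.

Hypothesis K0 : has_pchar0 K.

Lemma fExp_lift_chart1 t p q a b U W A B :
  ord_ge p 2 -> vf_order2 (a, b) -> vf_order2 (A, B) ->
  fExp (a, b) = (fadd x p, fadd y q) ->
  lift_map (Some t) p q U W -> lift_vf (Some t) a b A B -> fExp (A, B) = (U, W).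
Proof.
move=> p2 ab2 AB2 [Ex Ey] [EU EW] [EA EB].
have related_x : vf_apply (A, B) (pull1 t x) = pull1 t a by rewrite (pull1_x t) vf_apply_fX EA.
have related_y : vf_apply (A, B) (pull1 t y) = pull1 t b.
  rewrite pull1_y vf_applyM vf_apply_fX vf_applyD vf_apply_fY vf_applyZ vf_apply1.
  by rewrite -EB !faddE !fmulE fconstE scaler0 addr0 mulrC.
have pull1_fexp g : pull1 t (fexp (a, b) g) = fexp (A, B) (pull1 t g).
  exact: (pullback_fexp (ord_ge_pull1 t) (pull1_1 t) (pull1M t x) (pull1M t y)
    ab2 AB2 related_x related_y).
have ExpU : fexp (A, B) x = U.
  by rewrite -[in LHS](pull1_x t) -pull1_fexp Ex faddE raddfD /= pull1_x EU.
have ExpW : fexp (A, B) y = W.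
  have ExpU_y : U * (fexp (A, B) y + t%:A) = fexp (A, B) (pull1 t y).
    by rewrite pull1_y (fexpM AB2 K0) raddfD /= fexp_alg // ExpU.
  have : U * (fexp (A, B) y + t%:A) = U * (W + t%:A).
    rewrite ExpU_y -pull1_fexp Ey faddE raddfD /= pull1_y.
    by move: EW; rewrite !faddE !fmulE fconstE => ->.
  by rewrite EU faddE => /(lreg_x_add (ord_ge_pull1 t p2))/addIr.
by rewrite /fExp ExpU ExpW.
Qed.

Lemma fExp_lift_chart2 p q a b U W A B :
  ord_ge q 2 -> vf_order2 (a, b) -> vf_order2 (A, B) ->
  fExp (a, b) = (fadd x p, fadd y q) ->
  lift_map None p q U W -> lift_vf None a b A B -> fExp (A, B) = (U, W).
Proof.
move=> q2 ab2 AB2 [Ex Ey] [EW EU] [EA EB].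
have related_x : vf_apply (A, B) (pull2 x) = pull2 a.
  by rewrite pull2_x vf_applyM vf_apply_fX vf_apply_fY -EA !faddE !fmulE mulrC.
have related_y : vf_apply (A, B) (pull2 y) = pull2 b by rewrite pull2_y vf_apply_fY EB.
have pull2_fexp g : pull2 (fexp (a, b) g) = fexp (A, B) (pull2 g).
  exact: (pullback_fexp (@ord_ge_pull2 K) (@pull2_1 K) (pull2M x) (pull2M y)
    ab2 AB2 related_x related_y).
have ExpW : fexp (A, B) y = W.
  by rewrite -[in LHS]pull2_y -pull2_fexp Ey faddE raddfD /= pull2_y EW.
have ExpU : fexp (A, B) x = U.
  have ExpW_x : W * fexp (A, B) x = fexp (A, B) (pull2 x).
    by rewrite pull2_x (fexpM AB2 K0) ExpW mulrC.
  have : W * fexp (A, B) x = W * U.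
    rewrite ExpW_x -pull2_fexp Ex faddE raddfD /= pull2_x.
    by move: EU; rewrite !faddE !fmulE mulrC => ->.
  by rewrite EW faddE => /(lreg_y_add (ord_ge_pull2 q2)).
by rewrite /fExp ExpU ExpW.
Qed.

End LiftToBlowup.

Theorem mainTheorem4 (R : realType) (p q a b : fps R[i]) :
  convergent p -> convergent q ->
  ord_ge p 2 -> ord_ge q 2 -> ord_ge a 2 -> ord_ge b 2 ->
  fExp (a, b) = (fadd fX p, fadd fY q) ->
  forall d : option R[i], char_dir p q d ->
  forall U W A B : fps R[i],
    lift_map d p q U W -> lift_vf d a b A B ->
    fExp (A, B) = (U, W).
Proof.
move=> _ _ p2 q2 a2 b2 FExp d dir U W A B lift_F lift_X.
have ab2 : vf_order2 (a, b) by [].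
have [jet_p jet_q] := fExp_jet2 ab2 FExp.
have := char_dir_parallel p2 q2 dir; rewrite (eq_hev2 _ jet_p) (eq_hev2 _ jet_q).
have C0 : has_pchar0 R[i] := pchar_num _.
case: d {dir} lift_F lift_X => [t|] /= lift_F lift_X parallel.
- have AB2 : vf_order2 (A, B).
    apply: lift_vf_chart1_order2 a2 b2 _ lift_X.
    by rewrite mulr1 in parallel; rewrite parallel mulrC.
  exact: (fExp_lift_chart1 C0 p2 ab2 AB2 FExp lift_F lift_X).
- have AB2 : vf_order2 (A, B).
    by apply: lift_vf_chart2_order2 a2 b2 _ lift_X; rewrite mulr0 mulr1 in parallel.
  exact: (fExp_lift_chart2 C0 q2 ab2 AB2 FExp lift_F lift_X).
Qed.
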